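(* Let $(G,E)$ be an undirected weighted graph with nodes $n_1,\dots,n_N$, symmetric nonnegative weights $w_{ij}$, strengths $k_i=\sum_s w_{is}$, $2m=\sum_i k_i>0$, let $\gamma\in\mathbb R$ and $\hat n\ge1$. Let $X=\{f\mid f:G\to\mathbb R^{\hat n}\}$, identified with $\mathbb R^{N\times\hat n}$ and given the Euclidean ($\ell_2$) metric. Then, as $\epsilon\to0^+$, the functionals $H_\epsilon$ $\Gamma$-converge to $H$ on $X$, where $$H_\epsilon(f)=\sum_{l=1}^{\hat n}\langle f^{(l)},\mathbf Lf^{(l)}\rangle+\frac{1}{\epsilon^2}\sum_{i=1}^N W_{\mathrm{multi}}(f(n_i))-\gamma\|f-\mathrm{mean}(f)\|_{\ell_2}^2,$$ $$H(f)=\begin{cases}|f|_{TV}-\gamma\|f-\mathrm{mean}(f)\|_{\ell_2}^2,& f\in X^p,\\ +\infty,&\text{otherwise.}\end{cases}$$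
   Context: $\mathbf L=\mathbf D-\mathbf W$ is the graph Laplacian, where $\mathbf W=[w_{ij}]$ and $\mathbf D=\mathrm{diag}(k_1,\dots,k_N)$; for $z:G\to\mathbb R$, $\langle z,\mathbf Lz\rangle=\frac12\sum_{i,j}w_{ij}(z_i-z_j)^2$. For $f\in X$, $f=(f^{(1)},\dots,f^{(\hat n)})$ with $f^{(l)}:G\to\mathbb R$. $V^{\hat n}=\{\vec e_1,\dots,\vec e_{\hat n}\}$ is the standard basis of $\mathbb R^{\hat n}$ and $X^p=\{f\mid f:G\to V^{\hat n}\}$. The multi-well potential is $W_{\mathrm{multi}}(x)=\prod_{l=1}^{\hat n}\|x-\vec e_l\|_{\ell_1}^2$ for $x\in\mathbb R^{\hat n}$. For $h:G\to\mathbb R$: $|h|_{TV}=\frac12\sum_{i,j}w_{ij}|h_i-h_j|$, $\|h\|_{\ell_2}^2=\sum_i k_ih_i^2$, $\mathrm{mean}(h)=\frac1{2m}\sum_ik_ih_i$; for vector-valued $f$ these are summed over components ($|f|_{TV}=\sum_l|f^{(l)}|_{TV}$, $\|f\|^2_{\ell_2}=\sum_l\|f^{(l)}\|^2_{\ell_2}$) and $\mathrm{mean}(f)$ is taken componentwise. $\Gamma$-convergence: functionals $F_\epsilon:X\to\mathbb R\cup\{\pm\infty\}$ $\Gamma$-converge to $F$ as $\epsilon\to0^+$ if for every sequence $\epsilon_n\to0^+$ and every $f\in X$: (i) for every sequence $f_n\to f$, $F(f)\le\liminf_n F_{\epsilon_n}(f_n)$; (ii) there exists a sequence $f_n\to f$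 with $F(f)\ge\limsup_nF_{\epsilon_n}(f_n)$. *)

From HB Require Import structures.
From mathcomp Require Import all_boot all_order all_algebra.
From mathcomp Require Import all_classical all_reals all_analysis.
Set Implicit Arguments. Unset Strict Implicit. Unset Printing Implicit Defensive.
Import Order.TTheory GRing.Theory Num.Theory.
Local Open Scope ring_scope.
Local Open Scope classical_set_scope.
Import numFieldNormedType.Exports.

Section Graph.
Variables (R : realType) (N nh : nat) (w : 'I_N -> 'I_N -> R).

(* X = functions G -> R^nh, f i l = f^(l)(n_i) *)
Definition fn_space := 'I_N -> 'I_nh -> R.

Definition strength (i : 'I_N) : R := \sum_(s < N) w i s.
Definition two_m : R := \sum_(i < N) strength i.

Definition laplacian : 'M[R]_N :=
  \matrix_(i, j) ((i == j)%:R * strength i - w i j).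

Definition lap_form (z : 'I_N -> R) : R :=
  \sum_(i < N) z i * \sum_(j < N) laplacian i j * z j.

Definition std_basis (l : 'I_nh) : 'I_nh -> R := fun j => (j == l)%:R.

Definition W_multi (x : 'I_nh -> R) : R :=
  \prod_(l < nh) (\sum_(j < nh) `|x j - std_basis l j|) ^+ 2.

Definition tv_scalar (h : 'I_N -> R) : R :=
  2^-1 * \sum_(i < N) \sum_(j < N) w i j * `|h i - h j|.
Definition tv (f : fn_space) : R := \sum_(l < nh) tv_scalar (fun i => f i l).

Definition mean_scalar (h : 'I_N -> R) : R :=
  two_m^-1 * \sum_(i < N) strength i * h i.
Definition l2sq_scalar (h : 'I_N -> R) : R :=
  \sum_(i < N) strength i * h i ^+ 2.
Definition var_term (f : fn_space) : R :=
  \sum_(l < nh) l2sq_scalar (fun i => f i l - mean_scalar (fun i' => f i' l)).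

Definition in_Xp (f : fn_space) : Prop :=
  forall i : 'I_N, exists l : 'I_nh, f i = std_basis l.

Definition H_eps (gamma eps : R) (f : fn_space) : R :=
  \sum_(l < nh) lap_form (fun i => f i l)
  + eps^-2 * \sum_(i < N) W_multi (f i)
  - gamma * var_term f.

Definition H_lim (gamma : R) (f : fn_space) : \bar R :=
  if `[< in_Xp f >] then ((tv f - gamma * var_term f)%:E)%E else (+oo)%E.

Definition eucl_dist (f g : fn_space) : R :=
  Num.sqrt (\sum_(i < N) \sum_(l < nh) (f i l - g i l) ^+ 2).

Definition conv_to (fs : nat -> fn_space) (f : fn_space) : Prop :=
  (fun n => eucl_dist (fs n) f) @ \oo --> (0 : R).

Definition Gamma_conv (F : R -> fn_space -> \bar R) (F0 : fn_space -> \bar R)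
  : Prop :=
  forall eps : nat -> R, (forall n, 0 < eps n) -> eps @ \oo --> (0 : R) ->
  forall f : fn_space,
    (forall fs : nat -> fn_space, conv_to fs f ->
       (F0 f <= limn_einf (fun n => F (eps n) (fs n)))%E) /\
    (exists fs : nat -> fn_space, conv_to fs f /\
       (limn_esup (fun n => F (eps n) (fs n)) <= F0 f)%E).

End Graph.

From mathcomp Require Import all_boot all_order all_algebra.
From mathcomp Require Import all_classical all_reals all_analysis.
From mathcomp Require Import ring lra.
Import Order.TTheory GRing.Theory Num.Theory.
Import numFieldNormedType.Exports.
Local Open Scope ring_scope.
Local Open Scope classical_set_scope.

(* Write H_eps = smooth_part + eps^-2 * penalty: the smooth part (Dirichlet
   energy minus gamma times the variance) is continuous on X, while the penalty
   sum_i W_multi (f n_i) is nonnegative and vanishes exactly on X^p.  For a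
   0/1-valued z, <z, L z> = 1/2 sum_ij w_ij (z_i - z_j)^2 is its total
   variation, so H_eps = H on X^p: constant sequences recover, and the liminf
   inequality follows from H_eps >= smooth_part.  Off X^p the penalty stays
   bounded away from 0 along any convergent sequence, so H_eps -> +oo. *)

Section SequenceLimits.
Context {R : realFieldType}.

Lemma cvgn_sum (k : nat) (u : 'I_k -> R^nat) (a : 'I_k -> R) :
  (forall i, u i n @[n --> \oo] --> a i) ->
  \sum_(i < k) u i n @[n --> \oo] --> \sum_(i < k) a i.
Proof. by move=> ua; apply: cvg_big => //; exact: add_continuous. Qed.

Lemma cvgn_prod (k : nat) (u : 'I_k -> R^nat) (a : 'I_k -> R) :
  (forall i, u i n @[n --> \oo] --> a i) ->
  \prod_(i < k) u i n @[n --> \oo] --> \prod_(i < k) a i.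
Proof. by move=> ua; apply: cvg_big => //; exact: mul_continuous. Qed.

Lemma cvgy_addr_mul {a s t : R^nat} {p c : R} : 0 < c ->
  a @ \oo --> p -> s @ \oo --> c -> t @ \oo --> +oo ->
  a n + t n * s n @[n --> \oo] --> +oo.
Proof.
move=> c0 ap sc ty; apply/cvgryPge => A.
near=> n.
have a_ge : p - 1 <= a n by near: n; move/cvgr_ge: ap; apply; lra.
have s_ge : c / 2 <= s n by near: n; move/cvgr_ge: sc; apply; lra.
have t_ge0 : 0 <= t n by near: n; exact: cvgry_ge.
have t_ge : 2 * (A - p + 1) / c <= t n by near: n; exact: cvgry_ge.
have tc_ge : A - p + 1 <= t n * (c / 2).
  by move: t_ge; rewrite ler_pdivrMr // => t_ge; lra.
have : t n * (c / 2) <= t n * s n by exact: ler_wpM2l.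
lra.
Unshelve. all: by end_near. Qed.

Lemma cvgy_invr_sqr {eps : R^nat} : (forall n, 0 < eps n) -> eps @ \oo --> 0 ->
  eps n ^- 2 @[n --> \oo] --> +oo.
Proof.
move=> eps_gt0 eps0; apply/cvgrVy; first by near=> n; exact: exprn_gt0.
have -> : (0 : R) = 0 ^+ 2 by rewrite expr0n.
by rewrite expr2; under eq_cvg do rewrite expr2; exact: cvgM.
Unshelve. all: by end_near. Qed.

End SequenceLimits.

Lemma le_limn_einf (R : realType) (u v : (\bar R)^nat) :
  (forall n, u n <= v n)%E -> (limn_einf u <= limn_einf v)%E.
Proof.
move=> uv; rewrite !limn_einf_lim; apply: lee_lim; try exact: is_cvg_einfs.
near=> n; apply: le_ereal_inf_tmp => _ [k /= nk <-].
apply: le_trans (uv k); apply: ereal_inf_lbound; by exists k.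
Unshelve. all: by end_near. Qed.

Section GraphFunctional.
Variables (R : realType) (N nh : nat) (w : 'I_N -> 'I_N -> R).
Hypothesis w_sym : forall i j, w i j = w j i.

Definition penalty (f : fn_space R N nh) : R := \sum_(i < N) W_multi (f i).

Definition smooth_part (gamma : R) (f : fn_space R N nh) : R :=
  \sum_(l < nh) lap_form w (fun i => f i l) - gamma * var_term w f.

Lemma H_epsE gamma eps f :
  H_eps w gamma eps f = smooth_part gamma f + eps ^- 2 * penalty f.
Proof. by rewrite /H_eps /smooth_part /penalty; ring. Qed.

Lemma conv_to_coord i l {fs : nat -> fn_space R N nh} {f} :
  conv_to fs f -> fs n i l @[n --> \oo] --> f i l.
Proof.
move=> /cvgr_dist_le fsf; apply/cvgrPdist_le => e e0.
apply: filterS (fsf e e0) => n; rewrite sub0r normrN; apply: le_trans.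
rewrite /eucl_dist distrC -sqrtr_sqr ger0_norm ?sqrtr_ge0 //; apply: ler_wsqrtr.
rewrite (bigD1 i) //= (bigD1 l) //= -addrA ler_wpDr // addr_ge0 //.
  by apply: sumr_ge0 => *; exact: sqr_ge0.
by apply: sumr_ge0 => *; apply: sumr_ge0 => *; exact: sqr_ge0.
Qed.

Lemma cvg_smooth_part gamma {fs : nat -> fn_space R N nh} {f} : conv_to fs f ->
  smooth_part gamma (fs n) @[n --> \oo] --> smooth_part gamma f.
Proof.
move=> fsf; have coord i l := conv_to_coord i l fsf.
apply: cvgB.
  apply: cvgn_sum => l; apply: cvgn_sum => i; apply: cvgM => //.
  by apply: cvgn_sum => j; apply: cvgM => //; exact: cvg_cst.
apply: cvgM; first exact: cvg_cst.
apply: cvgn_sum => l; apply: cvgn_sum => i; apply: cvgM; first exact: cvg_cst.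
rewrite expr2; under eq_cvg do rewrite expr2.
have cvg_dev : fs n i l - mean_scalar w (fun i' => fs n i' l) @[n --> \oo] -->
               f i l - mean_scalar w (fun i' => f i' l).
  apply: cvgB => //; apply: cvgM; first exact: cvg_cst.
  by apply: cvgn_sum => j; apply: cvgM => //; exact: cvg_cst.
exact: cvgM.
Qed.

Lemma cvg_penalty {fs : nat -> fn_space R N nh} {f} : conv_to fs f ->
  penalty (fs n) @[n --> \oo] --> penalty f.
Proof.
move=> fsf; apply: cvgn_sum => i; apply: cvgn_prod => l.
rewrite expr2; under eq_cvg do rewrite expr2.
have cvg_l1 : \sum_(j < nh) `|fs n i j - std_basis R l j| @[n --> \oo] -->
              \sum_(j < nh) `|f i j - std_basis R l j|.
  apply: cvgn_sum => j; apply: cvg_norm; apply: cvgB; first exact: conv_to_coord.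
  exact: cvg_cst.
exact: cvgM.
Qed.

Lemma W_multi_ge0 (x : 'I_nh -> R) : 0 <= W_multi x.
Proof. by apply: prodr_ge0 => l _; exact: sqr_ge0. Qed.

Lemma W_multi_eq0 (x : 'I_nh -> R) : W_multi x = 0 <-> exists l, x = std_basis R l.
Proof.
split=> [/eqP/prodf_eq0 [l _] | [l ->]].
  rewrite sqrf_eq0 => /eqP/psumr_eq0P x_l; exists l; apply: funext => j.
  by apply/eqP; rewrite -subr_eq0 -normr_eq0 x_l.
rewrite /W_multi (bigD1 l) //= big1 ?expr0n ?mul0r // => j _.
by rewrite subrr normr0.
Qed.

Lemma penalty_ge0 f : 0 <= penalty f.
Proof. by apply: sumr_ge0 => i _; exact: W_multi_ge0. Qed.

Lemma penalty_eq0 f : penalty f = 0 <-> in_Xp f.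
Proof.
split=> [/psumr_eq0P f0 i | fXp].
  by apply/W_multi_eq0/f0 => // j _; exact: W_multi_ge0.
by apply: big1 => i _; apply/W_multi_eq0.
Qed.

Lemma lap_formE (z : 'I_N -> R) :
  lap_form w z = 2^-1 * \sum_(i < N) \sum_(j < N) w i j * (z i - z j) ^+ 2.
Proof.
have row_sum i : \sum_(j < N) laplacian w i j * z j =
                 \sum_(j < N) w i j * (z i - z j).
  under eq_bigr do rewrite mxE mulrBl.
  rewrite sumrB (bigD1 i) //= eqxx mul1r big1 ?addr0 => [|j /negbTE ji]; last first.
    by rewrite eq_sym ji !mul0r.
  by rewrite /strength mulr_suml -sumrB; apply: eq_bigr => j _; ring.
have swap : \sum_(i < N) \sum_(j < N) w i j * (z j * (z j - z i)) =
            \sum_(i < N) \sum_(j < N) w i j * (z i * (z i - z j)).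
  by rewrite exchange_big; apply: eq_bigr => i _; apply: eq_bigr => j _; rewrite w_sym.
have -> : \sum_(i < N) \sum_(j < N) w i j * (z i - z j) ^+ 2 =
          \sum_(i < N) \sum_(j < N) w i j * (z i * (z i - z j))
        + \sum_(i < N) \sum_(j < N) w i j * (z j * (z j - z i)).
  rewrite -big_split; apply: eq_bigr => i _; rewrite -big_split.
  by apply: eq_bigr => j _; rewrite /=; ring.
rewrite swap /lap_form; under eq_bigr do rewrite row_sum mulr_sumr.
have halve (x : R) : 2^-1 * (x + x) = x by field.
by rewrite halve; apply: eq_bigr => i _; apply: eq_bigr => j _; ring.
Qed.

Lemma lap_form_indicator (z : 'I_N -> R) : (forall i, z i = 0 \/ z i = 1) ->
  lap_form w z = tv_scalar w z.
Proof.
move=> z01; rewrite lap_formE /tv_scalar; congr (_ * _).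
apply: eq_bigr => i _; apply: eq_bigr => j _; congr (_ * _).
by case: (z01 i) => ->; case: (z01 j) => ->;
  rewrite ?subrr ?sub0r ?subr0 ?normrN ?normr0 ?normr1 ?expr0n ?sqrrN ?expr1n.
Qed.

Lemma smooth_part_Xp gamma f : in_Xp f ->
  smooth_part gamma f = tv w f - gamma * var_term w f.
Proof.
move=> fXp; congr (_ - _); apply: eq_bigr => l _; apply: lap_form_indicator => i.
by have [l' ->] := fXp i; rewrite /std_basis; case: (l == l'); [right | left].
Qed.

Lemma conv_to_cst (f : fn_space R N nh) : conv_to (fun=> f) f.
Proof.
rewrite /conv_to /eucl_dist (_ : (fun n => _) = fun=> 0); first exact: cvg_cst.
apply: funext => n; rewrite big1 ?sqrtr0 // => i _; rewrite big1 // => l _.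
by rewrite subrr expr0n.
Qed.

Lemma H_eps_Xp gamma eps (f : fn_space R N nh) : in_Xp f ->
  H_eps w gamma eps f = tv w f - gamma * var_term w f.
Proof.
by move=> fXp; rewrite H_epsE (proj2 (penalty_eq0 f) fXp) mulr0 addr0 smooth_part_Xp.
Qed.

Lemma H_eps_cvgy gamma {eps : R^nat} {fs : nat -> fn_space R N nh} {f} :
  (forall n, 0 < eps n) -> eps @ \oo --> 0 -> conv_to fs f -> ~ in_Xp f ->
  H_eps w gamma (eps n) (fs n) @[n --> \oo] --> +oo.
Proof.
move=> eps_gt0 eps0 fsf fNXp.
have penalty_gt0 : 0 < penalty f.
  by rewrite lt_neqAle penalty_ge0 andbT eq_sym; apply/eqP => /penalty_eq0.
rewrite (eq_cvg _ _ (fun n => H_epsE gamma (eps n) (fs n))).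
exact: (cvgy_addr_mul penalty_gt0 (cvg_smooth_part gamma fsf) (cvg_penalty fsf)
          (cvgy_invr_sqr eps_gt0 eps0)).
Qed.

Lemma H_lim_le_limn_einf gamma (eps : R^nat) (fs : nat -> fn_space R N nh) f :
  (forall n, 0 < eps n) -> eps @ \oo --> 0 -> conv_to fs f ->
  (H_lim w gamma f <= limn_einf (fun n => (H_eps w gamma (eps n) (fs n))%:E))%E.
Proof.
move=> eps_gt0 eps0 fsf; rewrite /H_lim; case: asboolP => [fXp | fNXp].
  have smooth_cvg : (smooth_part gamma (fs n))%:E @[n --> \oo] --> (smooth_part gamma f)%:E.
    by apply: cvg_EFin; [exact: nearW | exact: cvg_smooth_part].
  rewrite -smooth_part_Xp // -(cvg_limn_einf_sup smooth_cvg).1.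
  apply: le_limn_einf => n; rewrite lee_fin H_epsE lerDl mulr_ge0 ?penalty_ge0 //.
  by rewrite invr_ge0 exprn_ge0 // ltW.
have /cvgeryP H_eps_y := H_eps_cvgy gamma eps_gt0 eps0 fsf fNXp.
by rewrite (cvg_limn_einf_sup H_eps_y).1.
Qed.

End GraphFunctional.

Theorem mainTheorem2 (R : realType) (N nh : nat) (w : 'I_N -> 'I_N -> R)
  (gamma : R)
  (hsym : forall i j, w i j = w j i)
  (hnonneg : forall i j, 0 <= w i j)
  (h2m : 0 < two_m w)
  (hnh : (1 <= nh)%N) :
  @Gamma_conv R N nh (fun eps f => (@H_eps R N nh w gamma eps f)%:E)
    (@H_lim R N nh w gamma).
Proof.
move=> eps eps_gt0 eps0 f; split=> [fs fsf | ].
  exact: H_lim_le_limn_einf.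
exists (fun=> f); split; first exact: conv_to_cst.
rewrite /H_lim; case: asboolP => fXp; last by rewrite leey.
under eq_fun do rewrite H_eps_Xp //.
by rewrite (cvg_limn_einf_sup (cvg_cst _)).2.
Qed.
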